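(* Let $k,\ell_1,\dots,\ell_k$ be positive integers. If $1\le i<k$ and $\ell_{i+1}>1$, then $$|\langle \ell_1,\dots,\ell_{i-1},\ell_i+1,\ell_{i+1}-1,\ell_{i+2},\dots,\ell_k\rangle| = |\langle\ell_1,\dots,\ell_k\rangle| + |\langle \ell_1,\dots,\ell_{i-1}\rangle|\cdot|\langle \ell_{i+1}-1,\ell_{i+2},\dots,\ell_k\rangle|;$$ moreover $$|\langle\ell_1,\dots,\ell_{k-1},\ell_k+1\rangle| = |\langle\ell_1,\dots,\ell_k\rangle| + |\langle\ell_1,\dots,\ell_{k-1}\rangle|;$$ and, if $\ell_1>1$ (and $k\ge 2$), $$|\langle\ell_1-1,\ell_2,\dots,\ell_k\rangle| = |\langle\ell_1,\dots,\ell_k\rangle| - |\langle\ell_1+\ell_2-1,\ell_3,\dots,\ell_k\rangle|.$$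
   Context: For a nonnegative integer $m$ and a tuple $(\ell_1,\dots,\ell_m)$ of integers with partial sums $L_i=\ell_1+\dots+\ell_i$, define $$\langle\ell_1,\dots,\ell_m\rangle=\{(x_0,x_1,\dots,x_m)\in\mathbb Z^{m+1}: x_0=0,\ x_{i-1}<x_i\le L_i \text{ for all } 1\le i\le m\}.$$ For $m=0$ (empty tuple) this set is $\{(0)\}$, of size $1$. *)

From mathcomp Require Import all_boot all_order all_algebra.
From mathcomp Require Import finmap.
From mathcomp Require Import boolp classical_sets cardinality.
Set Implicit Arguments. Unset Strict Implicit. Unset Printing Implicit Defensive.
Import Order.TTheory GRing.Theory Num.Theory.
Local Open Scope ring_scope.
Local Open Scope classical_set_scope.

(* Partial sum L_i = l_1 + ... + l_i of the tuple l (l_j = nth 0 l (j-1)). *)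
Definition psum (l : seq int) (i : nat) : int := \sum_(j < i) nth 0 l j.

(* The set <l_1,...,l_m> of integer tuples (x_0,...,x_m), encoded as
   sequences x of length m+1 with x_i = nth 0 x i. *)
Definition lset (l : seq int) : set (seq int) :=
  [set x | size x = (size l).+1 /\ nth 0 x 0 = 0 /\
     forall i : nat, (1 <= i <= size l)%N ->
       nth 0 x i.-1 < nth 0 x i /\ nth 0 x i <= psum l i].

Definition lcard (l : seq int) : nat := #|` fset_set (lset l)|.

From mathcomp Require Import all_boot all_order all_algebra.
From mathcomp Require Import finmap.
From mathcomp Require Import boolp classical_sets cardinality.
From mathcomp Require Import zify.
Set Implicit Arguments. Unset Strict Implicit. Unset Printing Implicit Defensive.
Import Order.TTheory GRing.Theory Num.Theory.
Local Open Scope ring_scope.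

(* Allow a slack c in the upper bounds, x_i <= c + L_i.  In such a tuple x_1
   ranges over 1, ..., c + l_1, and subtracting x_1 from x_1, ..., x_m leaves
   a tuple for (l_2, ..., l_m) with slack c + l_1 - x_1.  Hence the number
   N(l, c) of tuples satisfies N(l_1 :: l, c) = sum_(t < c + l_1) N(l, t) and
   N([::], c) = 1.  Each identity of the theorem is a rearrangement of this
   recursion: one unit of slack is one more unit on the first entry, and
   N(p ++ s, c) depends linearly on the function N(s, _). *)

Definition lset_slack (l : seq int) (c : nat) : set (seq int) :=
  [set x | size x = (size l).+1 /\ nth 0 x 0 = 0 /\
     forall i : nat, (1 <= i <= size l)%N ->
       nth 0 x i.-1 < nth 0 x i /\ nth 0 x i <= c%:Z + psum l i].

(* [`|a|] stands for the entry [a], which is only right for [a >= 0]: hence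
   the hypotheses [all (>= 0) l] below. *)
Fixpoint enum_lset (l : seq int) (c : nat) : seq (seq int) :=
  if l is a :: l' then
    [seq 0 :: map (fun z => z + k.+1%:Z) y
       | k <- iota 0 (c + `|a|), y <- enum_lset l' (c + `|a| - k.+1)]
  else [:: [:: 0]].

Fixpoint nlset (l : seq int) (c : nat) : nat :=
  if l is a :: l' then \sum_(t < c + `|a|) nlset l' t else 1.

Lemma nlset_cons (a : int) (l : seq int) (c : nat) :
  nlset (a :: l) c = \sum_(t < c + `|a|) nlset l t.
Proof. by []. Qed.

Lemma psum0 (l : seq int) : psum l 0 = 0.
Proof. by rewrite /psum big_ord0. Qed.

Lemma psum_cons (a : int) (l : seq int) (i : nat) :
  psum (a :: l) i.+1 = a + psum l i.
Proof. by rewrite /psum big_ord_recl. Qed.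

Lemma lset_slack0 (l : seq int) : lset_slack l 0 = lset l.
Proof.
by apply/seteqP; split=> x [x_size [x0 x_bnd]]; do 2!split=> //;
  move=> i /x_bnd; rewrite add0r.
Qed.

Lemma enum_lset_sub (l : seq int) (c : nat) (x : seq int) :
  all (>= 0) l -> x \in enum_lset l c -> lset_slack l c x.
Proof.
elim: l c x => [|a l IH] c x /=.
  by move=> _; rewrite inE => /eqP ->; split=> //; split=> // -[].
case/andP=> a_ge0 l_ge0.
case/allpairsPdep=> k [y [+ /(IH _ _ l_ge0)[y_size [y0 y_bnd]] ->]].
rewrite mem_iota add0n => /andP[_ k_lt].
split; first by rewrite /= size_map y_size.
split=> //; case=> [|[|i]] //= i_le.
  by rewrite psum_cons psum0 (nth_map 0) ?y_size // y0; split; lia.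
have [y_lt y_le] := y_bnd i.+1 i_le.
rewrite psum_cons !(nth_map 0) ?y_size //=; last by lia.
split; first by rewrite ltrD2r.
(* The two occurrences of [y`_i.+1] differ in implicit instances, which lia
   would treat as distinct atoms. *)
by move: y_le; set u := nth _ y i.+1; lia.
Qed.

Lemma lset_sub_enum (l : seq int) (c : nat) (x : seq int) :
  all (>= 0) l -> lset_slack l c x -> x \in enum_lset l c.
Proof.
elim: l c x => [|a l IH] c x /=.
  by move=> _ [+ [+ _]]; case: x => [|? []] //= _ ->; rewrite inE.
case/andP=> a_ge0 l_ge0 [].
case: x => [|x0 [|x1 r]] //= [r_size] [-> x_bnd].
have [/= x1_gt0] := x_bnd 1%N isT; rewrite psum_cons psum0 => x1_le.
have x1E : (`|x1|.-1.+1)%:Z = x1 by lia.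
apply/allpairsPdep; exists `|x1|.-1, (map (fun z => z - x1) (x1 :: r)).
split.
- by rewrite mem_iota; lia.
- apply: IH => //; split; first by rewrite size_map /= r_size.
  split; first by rewrite /= subrr.
  case=> [|i] // i_le.
  have [] := x_bnd i.+2; first lia.
  rewrite psum_cons !(nth_map 0) /= ?r_size; try lia.
  move=> x_lt x_le; split; first by rewrite ltrD2r.
  by move: x_le; set u := nth _ r i; lia.
- by rewrite x1E -map_comp map_id_in // => z _ /=; rewrite subrK.
Qed.

Lemma enum_lset_uniq (l : seq int) (c : nat) :
  all (>= 0) l -> uniq (enum_lset l c).
Proof.
elim: l c => [|a l IH] c //= /andP[_ l_ge0].
apply: allpairs_uniq_dep => [|k _|]; [exact: iota_uniq | exact: IH |].
move=> [k1 y1] [k2 y2] /allpairsPdep[k1' [y1' [_ y1_mem e1]]].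
move=> /allpairsPdep[k2' [y2' [_ y2_mem e2]]].
case: e1 => ? ?; case: e2 => ? ?; subst.
have [+ [+ _]] := enum_lset_sub l_ge0 y1_mem.
case: y1' y1_mem => [|u1 t1] _ //= _ ->.
have [+ [+ _]] := enum_lset_sub l_ge0 y2_mem.
case: y2' y2_mem => [|u2 t2] _ //= _ ->.
rewrite !add0r => -[k_eq t_eq]; have k1E : k1' = k2' by lia.
by rewrite k1E in t_eq *; rewrite (inj_map (addIr _) t_eq).
Qed.

Lemma size_enum_lset (l : seq int) (c : nat) : size (enum_lset l c) = nlset l c.
Proof.
elim: l c => [|a l IH] c //=.
rewrite size_allpairs_dep sumnE big_map /=.
have -> : iota 0 (c + `|a|) = index_iota 0 (c + `|a|).
  by rewrite /index_iota subn0.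
under eq_bigr do rewrite IH.
rewrite big_nat_rev -(big_mkord xpredT).
by apply: eq_big_nat => k /andP[_ k_lt]; congr nlset; lia.
Qed.

Lemma lcard_nlset (l : seq int) : all (>= 0) l -> lcard l = nlset l 0.
Proof.
move=> l_ge0; rewrite /lcard -lset_slack0.
have -> : lset_slack l 0 = [set` [fset x | x in enum_lset l 0]%fset]%classic.
  rewrite predeqE => x /=; rewrite inE /=.
  by split; [exact: lset_sub_enum | exact: enum_lset_sub].
by rewrite set_fsetK card_fseq undup_id ?enum_lset_uniq ?size_enum_lset.
Qed.

Lemma nlset_slack (a : int) (l : seq int) (c d : nat) : 0 <= a ->
  nlset (a :: l) (c + d) = nlset ((a + d%:Z) :: l) c.
Proof.
move=> a_ge0; rewrite !nlset_cons.
by have -> : (c + d + `|a|)%N = (c + `|(a + d%:Z)%R|)%N by lia.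
Qed.

Lemma nlset_incr_last (p : seq int) (a : int) (c : nat) : 0 <= a ->
  nlset (rcons p (a + 1)) c = (nlset (rcons p a) c + nlset p c)%N.
Proof.
move=> a_ge0; elim: p c => [|b p IH] c /=.
  by rewrite !sum1_card !card_ord; lia.
by rewrite -big_split; apply: eq_bigr => t _; rewrite IH.
Qed.

Lemma nlset_shift_unit (p : seq int) (a b : int) (r : seq int) (c : nat) :
  0 <= a -> 1 <= b ->
  nlset (p ++ (a + 1) :: (b - 1) :: r) c
  = (nlset (p ++ a :: b :: r) c + nlset p c * nlset ((b - 1)%R :: r) 0)%N.
Proof.
move=> a_ge0 b_ge1; elim: p c => [|q p IH] c; last first.
  rewrite !cat_cons !(nlset_cons q) big_distrl -big_split.
  by apply: eq_bigr => t _; rewrite IH.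
rewrite !cat0s mul1n !(nlset_cons _ (_ :: r)).
have -> : (c + `|(a + 1)%R|)%N = (c + `|a|).+1 by lia.
rewrite big_ord_recl [RHS]addnC; congr (_ + _)%N; apply: eq_bigr => t _.
by rewrite lift0 -addn1 nlset_slack ?subr_ge0 // subrK.
Qed.

Lemma nlset_decr_head (a1 a2 : int) (r : seq int) : 1 < a1 -> 0 <= a2 ->
  nlset [:: a1, a2 & r] 0
  = (nlset [:: (a1 - 1)%R, a2 & r] 0 + nlset ((a1 + a2 - 1)%R :: r) 0)%N.
Proof.
move=> a1_gt1 a2_ge0; rewrite (nlset_cons a1) (nlset_cons (a1 - 1)).
have -> : (0 + `|a1|)%N = (0 + `|(a1 - 1)%R|).+1 by lia.
rewrite big_ord_recr; congr (_ + _)%N.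
rewrite -[nat_of_ord _]/(0 + `|(a1 - 1)%R|)%N nlset_slack //.
by congr (nlset (_ :: r) _); lia.
Qed.

Lemma lcard_incr_last (p : seq int) (a : int) : all (>= 0) p -> 0 <= a ->
  lcard (rcons p (a + 1)) = (lcard (rcons p a) + lcard p)%N.
Proof.
move=> p_ge0 a_ge0.
rewrite !lcard_nlset ?nlset_incr_last //.
all: by rewrite all_rcons p_ge0 andbT; lia.
Qed.

Lemma lcard_shift_unit (p : seq int) (a b : int) (r : seq int) :
  all (>= 0) p -> 0 <= a -> 1 <= b -> all (>= 0) r ->
  lcard (p ++ (a + 1) :: (b - 1) :: r)
  = (lcard (p ++ a :: b :: r) + lcard p * lcard ((b - 1)%R :: r))%N.
Proof.
move=> p_ge0 a_ge0 b_ge1 r_ge0.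
rewrite !lcard_nlset ?nlset_shift_unit //.
all: by rewrite ?all_cat ?p_ge0 /= ?r_ge0 ?andbT; lia.
Qed.

Lemma lcard_decr_head (a1 a2 : int) (r : seq int) :
  1 < a1 -> 0 <= a2 -> all (>= 0) r ->
  lcard [:: a1, a2 & r]
  = (lcard [:: (a1 - 1)%R, a2 & r] + lcard ((a1 + a2 - 1)%R :: r))%N.
Proof.
move=> a1_gt1 a2_ge0 r_ge0.
rewrite !lcard_nlset ?(@nlset_decr_head a1 a2 r) //.
all: by rewrite /= ?r_ge0 ?andbT; lia.
Qed.

Lemma cat_take_nth2_drop (T : Type) (x0 : T) (n : nat) (s : seq T) :
  (n.+1 < size s)%N ->
  s = take n s ++ [:: nth x0 s n, nth x0 s n.+1 & drop n.+2 s].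
Proof.
move=> n_lt.
by rewrite -(drop_nth x0 n_lt) -(drop_nth x0 (ltnW n_lt)) cat_take_drop.
Qed.

Theorem lemma4p2 (l : seq int) :
  (1 <= size l)%N -> all (fun a => 0 < a) l ->
  (forall i : nat, (1 <= i < size l)%N -> 1 < nth 0 l i ->
     lcard (take i.-1 l ++ (nth 0 l i.-1 + 1) :: (nth 0 l i - 1) :: drop i.+1 l)
     = (lcard l + lcard (take i.-1 l) * lcard ((nth 0 l i - 1)%R :: drop i.+1 l))%N)
  /\
  lcard (rcons (take (size l).-1 l) (nth 0 l (size l).-1 + 1))
    = (lcard l + lcard (take (size l).-1 l))%N
  /\
  ((2 <= size l)%N -> 1 < nth 0 l 0 ->
     (lcard ((nth 0 l 0 - 1) :: behead l))%:Z
     = (lcard l)%:Z - (lcard ((nth 0 l 0 + nth 0 l 1 - 1) :: drop 2 l))%:Z).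
Proof.
move=> l_ne l_gt0; have l_ge0 : all (>= 0) l by apply: sub_all l_gt0 => x /ltW.
split; [|split].
- case=> [|i] // /andP[_ i_lt] li_gt1 /=.
  have l_split := cat_take_nth2_drop 0 i_lt.
  have := l_ge0; rewrite {1}l_split all_cat /= => /and4P[p_ge0 a_ge0 _ r_ge0].
  by rewrite [in lcard l]l_split lcard_shift_unit // ltW.
- have l_split : l = rcons (take (size l).-1 l) (nth 0 l (size l).-1).
    by rewrite -take_nth ?prednK ?take_size.
  have := l_ge0; rewrite {1}l_split all_rcons => /andP[a_ge0 p_ge0].
  by rewrite [in lcard l]l_split lcard_incr_last.
- case: l l_gt0 l_ge0 {l_ne} => [|a1 [|a2 r]] //=.
  move=> /and3P[_ a2_gt0 _] /and3P[_ _ r_ge0] _ a1_gt1.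
  by rewrite drop0 (lcard_decr_head a1_gt1 (ltW a2_gt0) r_ge0) PoszD addrK.
Qed.
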